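(* For every $t\ge 0$ and every collection $\Omega$ of functions, $$\rho_1\bigl(\mathsf{cr}^{(t)}\bigr)=\rho_1\bigl(\mathsf{GTL}_2^{(t)}(\Omega)\bigr).$$
   Context: Fix integers $n\ge 1$ and $\ell\ge 1$. A graph is a triple $G=(V_G,E_G,\mathrm{col}_G)$ with $V_G=[n]=\{1,\dots,n\}$, $E_G$ a set of unordered pairs of distinct vertices (undirected, no loops), and a vertex labelling $\mathrm{col}_G:V_G\to\mathbb R^\ell$; $N_G(v)=\{u:uv\in E_G\}$. Let $\mathcal G_1=\{(G,v):G \text{ a graph},\ v\in V_G\}$. Tensor language: let $\Omega$ be a collection of functions, each $f:\mathbb R^p\to\mathbb R$ for some $p\ge1$. Expressions are generated by $\varphi::=\mathbf 1_{x=y}\mid \mathbf 1_{x\neq y}\mid E(x,y)\mid P_s(x)\mid \varphi\cdot\varphi\mid \varphi+\varphi\mid a\cdot\varphi\mid f(\varphi_1,\dots,\varphi_p)\mid \sum_x\varphi$ ($s\in[\ell]$, $a\in\mathbb R$, $f\in\Omega$ of arity $p$), with the usual free variables ($\sum_x$ binds $x$). Semantics for a graph $G$ and valuation $\nu$ of the variables in $V_G$: $[\![E(x,y)]\!]^\nu_G=1$ if $\nu(x)\nu(y)\in E_G$ else $0$; $[\![P_s(x)]\!]^\nu_G=\mathrm{col}_G(\nu(x))_s$; $[\![\mathbf 1_{x\,\mathrm{op}\,y}]\!]^\nu_G=1$ if $\nu(x)\,\mathrm{op}\,\nu(y)$ else $0$; $\cdot,+,a\cdot,f$ act on values; $[\![\sum_x\varphi]\!]^\nu_G=\sum_{v\in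 V_G}[\![\varphi]\!]^{\nu[x\mapsto v]}_G$. Summation depth $\mathrm{sd}$: $0$ for atoms, maximum over components for $\cdot,+,f(\dots)$, unchanged by $a\cdot$, and $\mathrm{sd}(\sum_x\varphi)=\mathrm{sd}(\varphi)+1$. Guarded fragment $\mathsf{GTL}_2(\Omega)$: the smallest set of expressions, each with exactly one free variable, which is $x_1$ or $x_2$, containing $\mathbf 1_{x_i=x_i}$, $\mathbf 1_{x_i\ne x_i}$, $P_s(x_i)$ ($i\in\{1,2\}$, $s\in[\ell]$), and closed under: $\varphi\cdot\psi$, $\varphi+\psi$ when $\varphi,\psi$ have the same single free variable; $a\cdot\varphi$; $f(\varphi_1,\dots,\varphi_p)$ for $f\in\Omega$ when all $\varphi_j$ have the same single free variable; and $\sum_{x_j}\bigl(E(x_i,x_j)\cdot\varphi\bigr)$ where $\{i,j\}=\{1,2\}$ and $\varphi$ has free variable $x_j$. $\mathsf{GTL}_2^{(t)}(\Omega)$ is its subset of summation depth at most $t$. $\rho_1(\mathsf{GTL}_2^{(t)}(\Omega))$ is the set of pairs $((G,v),(H,w))\in\mathcal G_1\times\mathcal G_1$ such that $[\![\varphi]\!]^{x_1\mapsto v}_G=[\![\varphi]\!]^{x_1\mapsto w}_H$ for all $\varphi\in\mathsf{GTL}_2^{(t)}(\Omega)$ with free variable $x_1$. Color refinement: $\mathsf{cr}^{(0)}(G,v)=\mathrm{col}_G(v)$ and $\mathsf{cr}^{(t+1)}(G,v)=\bigl(\mathsf{cr}^{(t)}(G,v),\{\!\{\mathsf{cr}^{(t)}(G,u):u\in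 N_G(v)\}\!\}\bigr)$ (multiset), compared as formal objects across graphs. $\rho_1(\mathsf{cr}^{(t)})=\{((G,v),(H,w)):\mathsf{cr}^{(t)}(G,v)=\mathsf{cr}^{(t)}(H,w)\}$. *)

From HB Require Import structures.
From Stdlib Require Import Reals.
From mathcomp Require Import all_boot all_order all_algebra.
From mathcomp Require Import boolp Rstruct.

Set Implicit Arguments.
Unset Strict Implicit.
Unset Printing Implicit Defensive.

Import GRing.Theory.
Local Open Scope ring_scope.

(* A graph on vertex set [n] = 'I_n with labels in R^l = ('I_l -> R):
   E_G is a set of unordered pairs of distinct vertices, i.e. a symmetric,
   irreflexive relation. *)
Record graph (n l : nat) := Graph {
  adj : rel 'I_n;
  adj_sym : forall u v, adj u v = adj v u;
  adj_irr : forall v, adj v v = false;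
  col : 'I_n -> 'I_l -> R
}.

Definition func := {p : nat & ('I_p -> R) -> R}.

(* Syntax of the tensor language; variables are natural numbers
   (x_1 is 1, x_2 is 2). *)
Inductive expr (l : nat) : Type :=
| EqV   : nat -> nat -> expr l
| NeqV  : nat -> nat -> expr l
| Edge  : nat -> nat -> expr l
| Lab   : 'I_l -> nat -> expr l
| Mul   : expr l -> expr l -> expr l
| Add   : expr l -> expr l -> expr l
| Scale : R -> expr l -> expr l
| App   : forall p : nat, (('I_p -> R) -> R) -> ('I_p -> expr l) -> expr l
| Sum   : nat -> expr l -> expr l.

Arguments EqV {l}. Arguments NeqV {l}. Arguments Edge {l}. Arguments Lab {l}.
Arguments App {l} p f args.
Arguments Sum {l}.

Fixpoint sem n l (G : graph n l) (nu : nat -> 'I_n) (e : expr l) : R :=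
  match e with
  | EqV x y => if nu x == nu y then 1 else 0
  | NeqV x y => if nu x != nu y then 1 else 0
  | Edge x y => if adj G (nu x) (nu y) then 1 else 0
  | Lab s x => col G (nu x) s
  | Mul a b => sem G nu a * sem G nu b
  | Add a b => sem G nu a + sem G nu b
  | Scale c a => c * sem G nu a
  | App p f args => f (fun k => sem G nu (args k))
  | Sum x a => \sum_(v : 'I_n) sem G (fun y => if y == x then v else nu y) a
  end.

Fixpoint sd l (e : expr l) : nat :=
  match e with
  | EqV _ _ | NeqV _ _ | Edge _ _ | Lab _ _ => 0%N
  | Mul a b | Add a b => maxn (sd a) (sd b)
  | Scale _ a => sd a
  | App p _ args => (\max_(k < p) sd (args k))%N
  | Sum _ a => (sd a).+1
  end.

(* The guarded fragment GTL_2(Omega): [gtl Omega i phi] means phi belongs to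
   GTL_2(Omega) and its unique free variable is x_i (i in {1,2}). *)
Inductive gtl (l : nat) (Omega : func -> Prop) : nat -> expr l -> Prop :=
| gtl_eq : forall i, (i = 1 \/ i = 2)%N -> gtl Omega i (EqV i i)
| gtl_neq : forall i, (i = 1 \/ i = 2)%N -> gtl Omega i (NeqV i i)
| gtl_lab : forall i s, (i = 1 \/ i = 2)%N -> gtl Omega i (Lab s i)
| gtl_mul : forall i a b, gtl Omega i a -> gtl Omega i b -> gtl Omega i (Mul a b)
| gtl_add : forall i a b, gtl Omega i a -> gtl Omega i b -> gtl Omega i (Add a b)
| gtl_scale : forall i c a, gtl Omega i a -> gtl Omega i (Scale c a)
| gtl_app : forall i p f args, Omega (existT _ p f) ->
    (forall k, gtl Omega i (args k)) -> gtl Omega i (App p f args)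
| gtl_sum : forall i j a, ((i = 1 /\ j = 2) \/ (i = 2 /\ j = 1))%N ->
    gtl Omega j a -> gtl Omega i (Sum j (Mul (Edge i j) a)).

Definition rho1_gtl n l (Omega : func -> Prop) (t : nat)
    (G : graph n l) (v : 'I_n) (H : graph n l) (w : 'I_n) : Prop :=
  forall phi : expr l, gtl Omega 1%N phi -> (sd phi <= t)%N ->
    sem G (fun _ => v) phi = sem H (fun _ => w) phi.

(* Colour refinement colours, as formal objects: a multiset over a type X is
   its multiplicity function X -> nat. *)
Fixpoint crcol (l t : nat) : Type :=
  match t with
  | 0 => 'I_l -> R
  | t'.+1 => (crcol l t' * (crcol l t' -> nat))%type
  end.

Fixpoint cr n l (t : nat) (G : graph n l) (v : 'I_n) : crcol l t :=
  match t return crcol l t with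
  | 0 => col G v
  | t'.+1 => (cr t' G v,
              fun c => #|[set u | adj G v u & `[< cr t' G u = c >] ]|)
  end.

Definition rho1_cr n l (t : nat) (G : graph n l) (v : 'I_n)
    (H : graph n l) (w : 'I_n) : Prop :=
  cr t G v = cr t H w.

From Pilot Require Import Defs.
From Stdlib Require Import Reals.
From mathcomp Require Import all_boot all_order all_algebra.
From mathcomp Require Import boolp Rstruct.

(* The value of a guarded expression of summation depth at most t at a vertex
   only depends on the colour cr^(t) of that vertex: the guarded sum, the only
   nontrivial case, ranges over the neighbours and only sees the multiset of
   their colours.
   Conversely, by induction on t, vertices of different colours are separated
   by an expression of depth at most t. If two vertices first differ at round
   t+1, some colour c occurs with different multiplicities among their
   neighbours. Affinely normalising the separators of c from every other colour
   occurring in the two graphs to the values 1 and 0 and multiplying them gives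
   an expression that is the indicator of c on both graphs; its guarded sum
   counts the neighbours of colour c. This direction uses no function of
   Omega. *)

Set Implicit Arguments.
Unset Strict Implicit.
Unset Printing Implicit Defensive.
Import GRing.Theory Num.Theory.
Local Open Scope ring_scope.

Section ColourClasses.
Variables (n : nat) (X : Type).
Implicit Types (N M : {set 'I_n}) (c : 'I_n -> X).

Definition colour_class c N x := [set v in N | `[< c v = x >]].

Lemma card_colour_class_setD1 c N v x : v \in N ->
  #|colour_class c N x| = (`[< c v = x >] + #|colour_class c (N :\ v) x|)%N.
Proof.
move=> vN; rewrite (cardsD1 v) !inE vN /=; congr (_ + _)%N.
by apply: eq_card => u; rewrite !inE; case: (u == v); rewrite ?andbF.
Qed.

Lemma sum_eq_of_colour_class_cards (cN cM : 'I_n -> X) (g g' : 'I_n -> R) N M :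
  (forall v v', cN v = cM v' -> g v = g' v') ->
  (forall x, #|colour_class cN N x| = #|colour_class cM M x|) ->
  \sum_(v in N) g v = \sum_(v in M) g' v.
Proof.
move=> hg; move hk: #|N| => k; elim: k N M hk => [|k IH] N M hN hcard.
  move: hcard; rewrite (cards0_eq hN) => hcard.
  case: (set_0Vmem M) => [->|[v' v'M]].
    by rewrite !big_set0.
  have := hcard (cM v'); rewrite (card_colour_class_setD1 _ _ v'M) asboolT //.
  have -> : colour_class cN set0 (cM v') = set0 by apply/setP => u; rewrite !inE.
  by rewrite cards0.
have /set0Pn [v vN] : N != set0 by rewrite -card_gt0 hN.
have /set0Pn [v'] : colour_class cM M (cN v) != set0.
  by rewrite -card_gt0 -hcard (card_colour_class_setD1 _ _ vN) asboolT.
rewrite inE => /andP [v'M /asboolP hv'].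
rewrite (big_setD1 v) // [RHS](big_setD1 v') //= (hg v v' (esym hv')); congr (_ + _).
apply: IH => [|x]; first by move: hN; rewrite (cardsD1 v) vN => -[].
apply/eqP; rewrite -(eqn_add2l `[< cN v = x >]) {2}(esym hv').
by rewrite -!card_colour_class_setD1 // hcard.
Qed.

End ColourClasses.

(* [sem] computes with Stdlib's [Rmult] and [Rplus]. *)
Lemma RmultE (x y : R) : Rmult x y = x * y. Proof. by []. Qed.
Lemma RplusE (x y : R) : Rplus x y = x + y. Proof. by []. Qed.

Section GuardedTensorLanguage.
Variables (n l : nat) (Omega : func -> Prop).
Implicit Types (G H K : graph n l) (phi psi : expr l) (nu : nat -> 'I_n).

Definition cr_nbcount t G v (c : crcol l t) :=
  #|[set u | adj G v u & `[< cr t G u = c >] ]|.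
Arguments cr_nbcount : clear implicits.

Lemma cr_nbcountE t G v c :
  cr_nbcount t G v c = #|colour_class (cr t G) [set u | adj G v u] c|.
Proof. by apply: eq_card => u; rewrite !inE. Qed.

Lemma cr_col t G H u u' : cr t G u = cr t H u' -> Defs.col G u = Defs.col H u'.
Proof. by elim: t => [//|t IH] /= [/IH]. Qed.

Lemma sum_adj_mul G u (g : 'I_n -> R) :
  \sum_v ((if adj G u v then 1 else 0) * g v) = \sum_(v in [set v | adj G u v]) g v.
Proof.
rewrite [RHS]big_mkcond; apply: eq_bigr => v _; rewrite inE.
by case: adj; rewrite ?mul1r ?mul0r.
Qed.

Lemma sem_guarded_sum G nu i j phi : i != j ->
  sem G nu (Sum j (Mul (Edge i j) phi)) =
  \sum_(v in [set v | adj G (nu i) v]) sem G (fun y => if y == j then v else nu y) phi.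
Proof.
move=> ij /=; rewrite (negbTE ij) eqxx -sum_adj_mul.
by apply: eq_bigr => v _; rewrite RmultE.
Qed.

Lemma gtl_guard_neq i j : ((i = 1 /\ j = 2) \/ (i = 2 /\ j = 1))%N -> i != j.
Proof. by case=> -[-> ->]. Qed.

Lemma sem_gtl_cr_invariant i phi : gtl Omega i phi ->
  forall t, (sd phi <= t)%N -> forall G H nu nu', cr t G (nu i) = cr t H (nu' i) ->
  sem G nu phi = sem H nu' phi.
Proof.
elim=> {i phi}.
- by move=> i _ t _ G H nu nu' _ /=; rewrite !eqxx.
- by move=> i _ t _ G H nu nu' _ /=; rewrite !eqxx.
- by move=> i s _ t _ G H nu nu' /cr_col /= ->.
- move=> i a b _ IHa _ IHb t /=; rewrite geq_max => /andP [ha hb] G H nu nu' hc.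
  by rewrite (IHa t ha G H nu nu' hc) (IHb t hb G H nu nu' hc).
- move=> i a b _ IHa _ IHb t /=; rewrite geq_max => /andP [ha hb] G H nu nu' hc.
  by rewrite (IHa t ha G H nu nu' hc) (IHb t hb G H nu nu' hc).
- by move=> i c a _ IHa t ha G H nu nu' hc /=; rewrite (IHa t ha G H nu nu' hc).
- move=> i p f args _ _ IH t ht G H nu nu' hc /=; congr f; apply: funext => k.
  exact: IH (leq_trans (leq_bigmax k) ht) G H nu nu' hc.
- move=> i j a /gtl_guard_neq ij _ IHa [|t] //.
  rewrite [sd _]/= max0n ltnS => ha G H nu nu' [_ hcount].
  rewrite !sem_guarded_sum //.
  apply: (@sum_eq_of_colour_class_cards _ _ (cr t G) (cr t H)) => [v v' hv|c].
    by apply: (IHa t ha) => /=; rewrite !eqxx.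
  by rewrite -!cr_nbcountE; apply: (congr1 (@^~ c) hcount).
Qed.

Definition prod_expr j (F : 'I_n -> expr l) (r : seq 'I_n) : expr l :=
  foldr (fun z acc => Mul (F z) acc) (EqV j j) r.

Lemma gtl_prod_expr j F r : (j = 1 \/ j = 2)%N ->
  (forall z, gtl Omega j (F z)) -> gtl Omega j (prod_expr j F r).
Proof. by move=> hj hF; elim: r => [|z r IH]; [apply: gtl_eq | apply: gtl_mul]. Qed.

Lemma sd_prod_expr j F r t :
  (forall z, (sd (F z) <= t)%N) -> (sd (prod_expr j F r) <= t)%N.
Proof. by move=> hF; elim: r => [|z r IH] //=; rewrite geq_max hF IH. Qed.

Lemma sem_prod_expr j F r K nu :
  sem K nu (prod_expr j F r) = \prod_(z <- r) sem K nu (F z).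
Proof.
by elim: r => [|z r IH]; rewrite ?big_nil ?big_cons /= ?eqxx // RmultE IH.
Qed.

Definition gtl_separates_cr t := forall i, (i = 1 \/ i = 2)%N ->
  forall G H x y, cr t G x <> cr t H y ->
  exists phi, [/\ gtl Omega i phi, (sd phi <= t)%N &
                  sem G (fun _ => x) phi <> sem H (fun _ => y) phi].

Definition is_cr_indicator t (c : crcol l t) K psi := forall z,
  sem K (fun _ => z) psi = if `[< cr t K z = c >] then 1 else 0.

Section Indicators.
Variables (t : nat) (j : nat) (c : crcol l t) (K0 : graph n l) (r : 'I_n).
Hypotheses (hsep : gtl_separates_cr t) (hj : (j = 1 \/ j = 2)%N) (hr : cr t K0 r = c).

Lemma gtl_colour_separator G z : exists f, [/\ gtl Omega j f, (sd f <= t)%N,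
  (forall K y, cr t K y = c -> sem K (fun _ => y) f = 1) &
  (cr t G z <> c -> sem G (fun _ => z) f = 0)].
Proof.
case: (pselect (cr t G z = c)) => hz.
  by exists (EqV j j); split=> //= [|K y _]; [apply: gtl_eq | rewrite eqxx].
have [psi [gpsi sdpsi]] : exists phi, [/\ gtl Omega j phi, (sd phi <= t)%N &
    sem K0 (fun _ => r) phi <> sem G (fun _ => z) phi].
  by apply: hsep => // hrz; apply: hz; rewrite -hrz.
set a := sem K0 _ psi; set b := sem G _ psi => /eqP; rewrite -subr_eq0 => hab.
exists (Scale (a - b)^-1 (Add psi (Scale (- b) (EqV j j)))); split=> /=.
- by apply: gtl_scale; apply: gtl_add => //; apply: gtl_scale; apply: gtl_eq.
- by rewrite geq_max sdpsi.
- move=> K y hy; rewrite !RmultE RplusE eqxx mulr1.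
  rewrite (@sem_gtl_cr_invariant _ _ gpsi t sdpsi K K0 _ (fun _ => r)) ?hr //.
  by rewrite mulVf.
- by move=> _; rewrite !RmultE RplusE eqxx mulr1 subrr mulr0.
Qed.

Lemma gtl_colour_indicator G H : exists psi, [/\ gtl Omega j psi, (sd psi <= t)%N,
  is_cr_indicator c G psi & is_cr_indicator c H psi].
Proof.
have [FG /all_and4 [gFG sdFG oneFG zeroFG]] := choice (gtl_colour_separator G).
have [FH /all_and4 [gFH sdFH oneFH zeroFH]] := choice (gtl_colour_separator H).
pose prod_all F := prod_expr j F (enum 'I_n).
have prod_all_one F K y : (forall z K y, cr t K y = c -> sem K (fun _ => y) (F z) = 1) ->
    cr t K y = c -> sem K (fun _ => y) (prod_all F) = 1.
  by move=> hF hy; rewrite sem_prod_expr big1 // => z _; apply: hF.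
have prod_all_zero F K z : sem K (fun _ => z) (F z) = 0 ->
    sem K (fun _ => z) (prod_all F) = 0.
  by move=> hz; rewrite sem_prod_expr (big_rem z) ?mem_enum //= hz mul0r.
exists (Mul (prod_all FG) (prod_all FH)); split=> [||z|z] /=.
- by apply: gtl_mul; apply: gtl_prod_expr.
- by rewrite geq_max !sd_prod_expr.
- case: asboolP => hz; rewrite RmultE; first by rewrite !prod_all_one ?mulr1.
  by rewrite prod_all_zero ?mul0r ?zeroFG.
- case: asboolP => hz; rewrite RmultE; first by rewrite !prod_all_one ?mulr1.
  by rewrite [X in _ * X]prod_all_zero ?mulr0 ?zeroFH.
Qed.

End Indicators.

Lemma sem_guarded_sum_indicator t (c : crcol l t) G nu i j psi :
  i != j -> gtl Omega j psi -> is_cr_indicator c G psi ->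
  sem G nu (Sum j (Mul (Edge i j) psi)) = (cr_nbcount t G (nu i) c)%:R.
Proof.
move=> ij gpsi hpsi; rewrite sem_guarded_sum // cr_nbcountE.
under eq_bigr => v _.
  rewrite (@sem_gtl_cr_invariant _ _ gpsi _ (leqnn _) G G _ (fun _ => v)) /= ?eqxx //.
  rewrite hpsi; over.
rewrite -big_mkcondr sumr_const; congr (_ *+ _).
by apply: eq_card => u; rewrite unfold_in /= !inE.
Qed.

Lemma cr_succ_neq t G H x y : cr t.+1 G x <> cr t.+1 H y ->
  cr t G x <> cr t H y \/ exists c, cr_nbcount t G x c <> cr_nbcount t H y c.
Proof.
move=> hne; case: (pselect (cr t G x = cr t H y)) => [e|]; [right | by left].
apply: contra_notP hne => /forallNP hcount /=; congr pair => //.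
by apply: funext => c; apply: contrapT; apply: hcount.
Qed.

Lemma cr_nbcount_gt0 t G x c : cr_nbcount t G x c <> 0%N -> exists u, cr t G u = c.
Proof.
move/eqP; rewrite cards_eq0 => /set0Pn [u]; rewrite inE => /andP [_ /asboolP].
by exists u.
Qed.

Lemma gtl_separates_cr_all t : gtl_separates_cr t.
Proof.
elim: t => [|t IH] i hi G H x y.
  move=> hne; have [s hs] : exists s, Defs.col G x s <> Defs.col H y s.
    by apply/existsNP => hs; apply: hne; apply: funext.
  by exists (Lab s i); split=> //; apply: gtl_lab.
case/cr_succ_neq => [hne|[c hc]].
  by have [phi [? ? ?]] := IH i hi G H x y hne; exists phi; split=> //; apply: leqW.
pose j := if i == 1%N then 2%N else 1%N.
have hij : ((i = 1 /\ j = 2) \/ (i = 2 /\ j = 1))%N by rewrite /j; case: hi => ->; auto.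
have hj : (j = 1 \/ j = 2)%N by case: hij => -[_ ->]; auto.
have [K0 [r hr]] : exists K0 r, cr t K0 r = c.
  case: (pselect (cr_nbcount t G x c = 0%N)) => [hG0|/cr_nbcount_gt0 [u hu]].
    have /cr_nbcount_gt0 [u hu] : cr_nbcount t H y c <> 0%N by rewrite -hG0 => /esym.
    by exists H, u.
  by exists G, u.
have [psi [gpsi sdpsi hG hH]] := gtl_colour_indicator IH hj hr G H.
exists (Sum j (Mul (Edge i j) psi)); split; [exact: gtl_sum | by rewrite /= max0n |].
rewrite (sem_guarded_sum_indicator _ (gtl_guard_neq hij) gpsi hG).
rewrite (sem_guarded_sum_indicator _ (gtl_guard_neq hij) gpsi hH).
by move/eqP; rewrite eqr_nat => /eqP.
Qed.

End GuardedTensorLanguage.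

Theorem theorem3 (n l : nat) (hn : (0 < n)%N) (hl : (0 < l)%N)
    (Omega : func -> Prop) (hOmega : forall f, Omega f -> (0 < projT1 f)%N)
    (t : nat) (G H : graph n l) (v w : 'I_n) :
  rho1_cr t G v H w <-> rho1_gtl Omega t G v H w.
Proof.
split=> [hcr phi gphi sdphi | hgtl].
  exact: sem_gtl_cr_invariant gphi _ sdphi _ _ _ _ hcr.
apply: contrapT => hne.
have [phi [gphi sdphi]] := gtl_separates_cr_all Omega (or_introl erefl) hne.
by apply; apply: hgtl.
Qed.
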